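(* Let $\beta>0$ and let $S$ be a possible forest with vertex set $\{v_{s_1},\dots,v_{s_k}\}$, $s_1<\dots<s_k$. Then for every $t\ge s_k$, \[ \Pr(S\subset G^t_{1,\beta})=\frac{\beta}{d_S^{\mathrm{in}}(v_1)+\beta}\prod_{i:\,v_i\in V^-}\frac{\Gamma(1+d_S^{\mathrm{in}}(v_i)+\beta)}{\Gamma(1+\beta)}\prod_{(v_i,v_j)\in E(S),\ i>j}\frac{1}{(2+\beta)(i^{1+\beta}j)^{1/(2+\beta)}}\cdot\exp\!\left(O\!\left(\sum_{j=2}^{k}\frac{c_S(s_j)^2}{j-1}\right)\right), \] where the implied constant in the $O(\cdot)$ does not depend on $S$ or $t$.
   Context: Fix a real $\beta>0$ and a positive integer $m$. The random tree process $(G^n_{1,\beta})_{n\ge1}$ is defined as follows. $G^1_{1,\beta}$ consists of a single vertex $v_1$ and no edges. Given $G^n_{1,\beta}$ with vertices $v_1,\dots,v_n$ and directed edges $e_2,\dots,e_n$ (where $e_i$ is the edge whose tail is $v_i$), $G^{n+1}_{1,\beta}$ is obtained by adding a vertex $v_{n+1}$ and a directed edge $e_{n+1}$ with tail $v_{n+1}$ and head a ''target vertex'' determined by a random variable $f_{n+1}$, independent of $f_2,\dots,f_n$, taking values in $\Omega_{n+1}=\{(i,v):1\le i\le n\}\cup\{(i,h),(i,t):2\le i\le n\}$ with $\Pr(f_{n+1}=(i,v))=\beta/((2+\beta)n-2)$ and $\Pr(f_{n+1}=(i,h))=\Pr(f_{n+1}=(i,t))=1/((2+\beta)n-2)$.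 If $f_{n+1}=(i,v)$ the target is $v_i$ (chosen ''uniformly''); if $f_{n+1}=(i,h)$ the target is the head of $e_i$, and if $f_{n+1}=(i,t)$ the target is the tail $v_i$ of $e_i$ (chosen ''preferentially'', by copying the head half-edge, resp. tail half-edge, of $e_i$). Consequently the target is $v_i$ with probability $(d_n(v_i)+\beta)/((2+\beta)n-2)$, where $d_n(v)$ is the degree of $v$ in $G^n_{1,\beta}$. Each edge is regarded as two half-edges, one at each endpoint; the degree of a vertex is the number of half-edges at it (loops count twice). A possible forest is a directed forest $S$ whose vertices are labelled vertices $v_i$ of the process (identified by their index), with no isolated vertices, in which every vertex has out-degree $0$ or $1$, every edge $(v_i,v_j)$ has $i>j$, and $v_1$ (if present) has out-degree $0$. ''$S\subset G^t_{1,\beta}$'' means every edge $(v_i,v_j)$ of $S$ is an edge of $G^t_{1,\beta}$ (with labels matching). $d_S^{\mathrm{in}}(v)$ is the in-degree of $v$ in $S$ (taken to be $0$ if $v\notin V(S)$). $V^-=\{v_i\in V(S):\exists j>i,\ (v_j,v_i)\in E(S)\}$. For $t\ge i$, $R_t(i)=|\{j>t:(v_j,v_i)\in E(S)\}|$, and $c_S(i)=\sum_{k=1}^{i-1}R_{i-1}(k)$, i.e. the number of edges of $S$ from $\{v_i,v_{i+1},\dots\}$ to $\{v_1,\dots,v_{i-1}\}$. *)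

From Stdlib Require Import Reals Lra Lia Arith List.
Import ListNotations.
Open Scope R_scope.

Inductive choice : Type :=
| CV (i : nat)   (* (i,v) : target v_i, chosen uniformly   *)
| CH (i : nat)   (* (i,h) : target = head of e_i            *)
| CT (i : nat).  (* (i,t) : target = tail v_i of e_i        *)

(** Omega_{n+1}, where n is the current number of vertices. *)
Definition Omega (n : nat) : list choice :=
  map CV (seq 1 n) ++ map CH (seq 2 (n - 1)) ++ map CT (seq 2 (n - 1)).

(** Pr(f_{n+1} = c). *)
Definition weight (beta : R) (n : nat) (c : choice) : R :=
  match c with
  | CV _ => beta / ((2 + beta) * INR n - 2)
  | _ => 1 / ((2 + beta) * INR n - 2)
  end.

(** A graph of the process is encoded by its head function:
    [hd i] = index of the head of edge e_i (tail v_i), for 2 <= i <= n. *)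
Definition target (hd : nat -> nat) (c : choice) : nat :=
  match c with
  | CV i => i
  | CH i => hd i
  | CT i => i
  end.

Definition upd (hd : nat -> nat) (k v : nat) : nat -> nat :=
  fun x => if Nat.eqb x k then v else hd x.

Definition Rsum_list (l : list R) : R := fold_right Rplus 0 l.

(** [expect beta k n hd F]: expectation of F(head function) after k more
    steps, starting from a graph with n vertices and head function hd,
    with independent f_{n+1}, f_{n+2}, ... distributed as above. *)
Fixpoint expect (beta : R) (k n : nat) (hd : nat -> nat)
  (F : (nat -> nat) -> R) : R :=
  match k with
  | O => F hd
  | S k' =>
      Rsum_list (map (fun c =>
        weight beta n c * expect beta k' (S n) (upd hd (S n) (target hd c)) F)
        (Omega n))
  end.

(** * Possible forests: list of directed edges (i, j) meaning (v_i, v_j). *)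
Definition forest := list (nat * nat).

Definition possible_forest (S : forest) : Prop :=
  NoDup S /\
  (forall e, In e S -> (1 <= snd e)%nat /\ (snd e < fst e)%nat) /\
  NoDup (map fst S).  (* out-degree <= 1 *)

Definition contained (S : forest) (hd : nat -> nat) : bool :=
  forallb (fun e => Nat.eqb (hd (fst e)) (snd e)) S.

(** Pr(S ⊂ G^t_{1,beta}); G^1 has one vertex v_1 and no edges. *)
Definition prob_sub (beta : R) (S : forest) (t : nat) : R :=
  expect beta (t - 1) 1 (fun _ => O)
    (fun hd => if contained S hd then 1 else 0).

Definition inV (S : forest) (v : nat) : bool :=
  existsb (fun e => orb (Nat.eqb (fst e) v) (Nat.eqb (snd e) v)) S.

Definition smax (S : forest) : nat :=
  fold_right (fun e m => Nat.max (Nat.max (fst e) (snd e)) m) O S.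

(** sorted vertex list s_1 < ... < s_k *)
Definition verts (S : forest) : list nat :=
  filter (inV S) (seq 1 (smax S)).

Definition din (S : forest) (v : nat) : nat :=
  length (filter (fun e => Nat.eqb (snd e) v) S).

Definition Vminus (S : forest) : list nat :=
  filter (fun v => Nat.ltb 0 (din S v)) (seq 1 (smax S)).

Definition cS (S : forest) (i : nat) : nat :=
  length (filter (fun e => andb (Nat.leb i (fst e)) (Nat.ltb (snd e) i)) S).

(** Gamma(1 + d + beta) / Gamma(1 + beta) = prod_{m=1}^{d} (m + beta),
    for natural d (rising factorial). *)
Fixpoint gamma_ratio (beta : R) (d : nat) : R :=
  match d with
  | O => 1
  | S d' => gamma_ratio beta d' * (INR (S d') + beta)
  end.

Definition Rprod_list (l : list R) : R := fold_right Rmult 1 l.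

Definition main_term (beta : R) (S : forest) : R :=
  beta / (INR (din S 1) + beta) *
  Rprod_list (map (fun v => gamma_ratio beta (din S v)) (Vminus S)) *
  Rprod_list (map (fun e =>
     1 / ((2 + beta) *
          Rpower (Rpower (INR (fst e)) (1 + beta) * INR (snd e)) (1 / (2 + beta))))
     S).

(** sum_{j=2}^{k} c_S(s_j)^2 / (j-1); (nth j (verts S)) is s_{j+1}. *)
Definition err_sum (S : forest) : R :=
  let k := length (verts S) in
  Rsum_list (map (fun j => INR (cS S (nth j (verts S) O)) ^ 2 / INR j)
                 (seq 1 (k - 1))).

(* Write N_n = (2+beta) n - 2 for the normalising constant
      at time n.  For a graph G^n with head function hd put
         X_n = [all edges of S with tail <= n are present]
               * prod_u (d_n(u)+beta)^(r_n(u)),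
      where x^(r) is the rising factorial and r_n(u) is the number of edges of
      S into u whose tail is > n.  One step of the process multiplies the
      conditional expectation of X by a deterministic factor M_n: 1/N_n if
      v_{n+1} is a tail of S, and 1 + c_n/N_n otherwise, c_n being the number
      of edges of S crossing n.  Iterating gives
         Pr(S in G^t) = X_1 * prod_{m<t} M_m,
      and X_1 is the Gamma-product of the main term.
   2. Asymptotics.  Taking logarithms, sum_m ln M_m is compared with
      sum_m (c_m/N_m - [m+1 tail] ln N_m); the latter regroups edge by edge
      into harmonic-type sums which match -ln((2+beta)(i^(1+beta) j)^(1/(2+beta)))
      up to O(1/j) per edge (i,j).  All errors are bounded by a constant
      times the pair sum D(S) = sum_{e,e'} 1/max(heads) over pairs of edges
      that cross a common point, and D(S) <= sum_j c_S(s_j)^2/(j-1). *)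

From Stdlib Require Import Reals List Lia Lra Arith.
Open Scope R_scope.

(** * Finite sums and products over lists *)

Notation sumR f l := (Rsum_list (map f l)).

Lemma Rsum_app l1 l2 : Rsum_list (l1 ++ l2) = Rsum_list l1 + Rsum_list l2.
Proof. induction l1; simpl; [lra | rewrite IHl1; lra]. Qed.

Lemma sumR_app {A} (f : A -> R) l1 l2 : sumR f (l1 ++ l2) = sumR f l1 + sumR f l2.
Proof. rewrite map_app, Rsum_app; reflexivity. Qed.

Lemma sumR_ext {A} (f g : A -> R) l :
  (forall x, In x l -> f x = g x) -> sumR f l = sumR g l.
Proof. intros H; rewrite (map_ext_in f g l H); reflexivity. Qed.

Lemma sumR_map {A B} (f : B -> R) (g : A -> B) l : sumR f (map g l) = sumR (fun x => f (g x)) l.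
Proof. rewrite map_map; reflexivity. Qed.

Lemma sumR_plus {A} (f g : A -> R) l : sumR (fun x => f x + g x) l = sumR f l + sumR g l.
Proof. induction l; simpl; [lra | rewrite IHl; lra]. Qed.

Lemma sumR_minus {A} (f g : A -> R) l : sumR (fun x => f x - g x) l = sumR f l - sumR g l.
Proof. induction l; simpl; [lra | rewrite IHl; lra]. Qed.

Lemma sumR_scal {A} c (f : A -> R) l : sumR (fun x => c * f x) l = c * sumR f l.
Proof. induction l; simpl; [lra | rewrite IHl; lra]. Qed.

Lemma sumR_zero {A} (l : list A) : sumR (fun _ => 0) l = 0.
Proof. induction l; simpl; [lra | rewrite IHl; lra]. Qed.

Lemma sumR_const {A} c (l : list A) : sumR (fun _ => c) l = c * INR (length l).
Proof.
  induction l as [|a l IH]; [simpl; lra|].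
  change (length (a :: l)) with (S (length l)). rewrite S_INR.
  unfold Rsum_list in *; simpl. rewrite IH; ring.
Qed.

Lemma sumR_le {A} (f g : A -> R) l :
  (forall x, In x l -> f x <= g x) -> sumR f l <= sumR g l.
Proof.
  induction l; simpl; intros H; [lra|].
  assert (f a <= g a) by auto. assert (sumR f l <= sumR g l) by auto. lra.
Qed.

Lemma sumR_nonneg {A} (f : A -> R) l : (forall x, In x l -> 0 <= f x) -> 0 <= sumR f l.
Proof. intros H. rewrite <- (sumR_zero l). apply sumR_le; auto. Qed.

Lemma sumR_abs {A} (f : A -> R) l : Rabs (sumR f l) <= sumR (fun x => Rabs (f x)) l.
Proof.
  induction l; simpl; [rewrite Rabs_R0; lra|].
  eapply Rle_trans; [apply Rabs_triang | lra].
Qed.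

Lemma sumR_exchange {A B} (F : A -> B -> R) l1 l2 :
  sumR (fun x => sumR (fun y => F x y) l2) l1 = sumR (fun y => sumR (fun x => F x y) l1) l2.
Proof.
  induction l1; simpl.
  - rewrite sumR_zero; reflexivity.
  - rewrite IHl1, <- sumR_plus; reflexivity.
Qed.

Lemma sumR_mult {A B} (f : A -> R) (g : B -> R) l l' :
  sumR f l * sumR g l' = sumR (fun x => sumR (fun y => f x * g y) l') l.
Proof.
  induction l; simpl; unfold Rsum_list in *; simpl; [ring|].
  rewrite Rmult_plus_distr_r, IHl. f_equal.
  fold (Rsum_list (map g l')). rewrite <- sumR_scal. reflexivity.
Qed.

Lemma sumR_single {A} (f : A -> R) l w :
  NoDup l -> In w l -> (forall x, In x l -> x <> w -> f x = 0) -> sumR f l = f w.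
Proof.
  induction l as [|a l IH]; simpl; intros Hnd Hin H; [contradiction|].
  inversion Hnd; subst. destruct Hin as [<-|Hin].
  - rewrite (sumR_ext f (fun _ => 0)), sumR_zero; [lra|].
    intros x Hx. apply H; auto. intro; subst; contradiction.
  - rewrite IH, H; auto; [lra|]. intro; subst; contradiction.
Qed.

Lemma sumR_elem {A} (f : A -> R) l w :
  In w l -> (forall x, In x l -> 0 <= f x) -> f w <= sumR f l.
Proof.
  induction l as [|a l IH]; simpl; intros Hin H; [contradiction|].
  destruct Hin as [<-|Hin].
  - assert (0 <= sumR f l) by (apply sumR_nonneg; auto). lra.
  - assert (0 <= f a) by auto. assert (f w <= sumR f l) by auto. lra.
Qed.

Lemma INR_count {A} (p : A -> bool) l :
  INR (length (filter p l)) = sumR (fun x => if p x then 1 else 0) l.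
Proof.
  induction l; [reflexivity|]. unfold Rsum_list in *. cbn [filter map fold_right].
  destruct (p a); [cbn [length]; rewrite S_INR, IHl; lra | rewrite IHl; lra].
Qed.

Lemma sumR_seq_point (g : nat -> R) x a k :
  sumR (fun v => if Nat.eqb x v then g v else 0) (seq a k) =
  if andb (Nat.leb a x) (Nat.ltb x (a + k)) then g x else 0.
Proof.
  revert a; induction k; intros a; simpl.
  - destruct (Nat.leb_spec a x); destruct (Nat.ltb_spec x (a + 0)); simpl; auto; lia.
  - rewrite IHk. destruct (Nat.eqb_spec x a) as [->|E].
    + destruct (Nat.leb_spec (S a) a); [lia|]. rewrite Nat.leb_refl.
      destruct (Nat.ltb_spec a (a + S k)); [simpl; lra | lia].
    + replace ((a <=? x) && (x <? a + S k))%bool with ((S a <=? x) && (x <? S a + k))%bool;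
        [lra|].
      apply Bool.eq_iff_eq_true. rewrite !Bool.andb_true_iff, !Nat.leb_le, !Nat.ltb_lt. lia.
Qed.

Lemma sumR_seq_point1 (g : nat -> R) x n :
  (1 <= x <= n)%nat -> sumR (fun v => if Nat.eqb x v then g v else 0) (seq 1 n) = g x.
Proof.
  intros H. rewrite sumR_seq_point.
  destruct (Nat.leb_spec 1 x); destruct (Nat.ltb_spec x (1 + n)); simpl; auto; lia.
Qed.

Lemma sumR_interval (f : nat -> R) a n lo hi :
  (a <= lo)%nat -> (lo <= hi)%nat -> (hi <= a + n)%nat ->
  sumR (fun m => if andb (Nat.leb lo m) (Nat.ltb m hi) then f m else 0) (seq a n) =
  sumR f (seq lo (hi - lo)).
Proof.
  intros H1 H2 H3.
  replace n with ((lo - a) + ((hi - lo) + (a + n - hi)))%nat by lia.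
  rewrite !seq_app, !sumR_app.
  rewrite (sumR_ext _ (fun _ => 0) (seq a (lo - a))).
  rewrite (sumR_ext _ (fun _ => 0) (seq (a + (lo - a) + (hi - lo)) _)).
  rewrite (sumR_ext _ f (seq (a + (lo - a)) (hi - lo))).
  - rewrite !sumR_zero. replace (a + (lo - a))%nat with lo by lia. lra.
  - intros x Hx; apply in_seq in Hx.
    destruct (Nat.leb_spec lo x); destruct (Nat.ltb_spec x hi); simpl; auto; lia.
  - intros x Hx; apply in_seq in Hx.
    destruct (Nat.leb_spec lo x); destruct (Nat.ltb_spec x hi); simpl; auto; lia.
  - intros x Hx; apply in_seq in Hx.
    destruct (Nat.leb_spec lo x); destruct (Nat.ltb_spec x hi); simpl; auto; lia.
Qed.

Lemma sumR_telescope (g : nat -> R) a n :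
  sumR (fun m => g (S m) - g m) (seq a n) = g (a + n)%nat - g a.
Proof.
  revert a; induction n; intros a; simpl; [rewrite Nat.add_0_r; lra|].
  rewrite IHn. replace (S a + n)%nat with (a + S n)%nat by lia. lra.
Qed.

Lemma sumR_telescope_inv a n :
  sumR (fun m => / INR m - / INR (S m)) (seq a n) = / INR a - / INR (a + n).
Proof.
  pose proof (sumR_telescope (fun k => - / INR k) a n) as T; cbv beta in T.
  rewrite (sumR_ext _ (fun m => - / INR (S m) - - / INR m)) by (intros; ring).
  rewrite T; ring.
Qed.

Lemma prodR_cons {A} (f : A -> R) a l :
  Rprod_list (map f (a :: l)) = f a * Rprod_list (map f l).
Proof. reflexivity. Qed.

Lemma prodR_ext {A} (f g : A -> R) l :
  (forall x, In x l -> f x = g x) -> Rprod_list (map f l) = Rprod_list (map g l).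
Proof. intros H; rewrite (map_ext_in f g l H); reflexivity. Qed.

Lemma prodR_change_one {A} (f g : A -> R) l w rho : NoDup l -> In w l ->
  (forall x, In x l -> x <> w -> g x = f x) -> g w = f w * rho ->
  Rprod_list (map g l) = Rprod_list (map f l) * rho.
Proof.
  induction l as [|a l IH]; intros Hnd Hin H Hw; [contradiction|].
  inversion Hnd; subst. rewrite !prodR_cons. destruct Hin as [<-|Hin].
  - rewrite Hw, (prodR_ext g f); [ring|].
    intros x Hx; apply H; [right; auto | intro; subst; contradiction].
  - rewrite IH, H; auto; [ring | left; auto | intro; subst; contradiction |].
    intros x Hx; apply H; right; auto.
Qed.

Lemma prodR_filter {A} (p : A -> bool) (g : A -> R) l :
  Rprod_list (map g (filter p l)) = Rprod_list (map (fun x => if p x then g x else 1) l).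
Proof.
  induction l; [reflexivity|]. rewrite prodR_cons. simpl filter.
  destruct (p a); [rewrite prodR_cons, IHl; auto | rewrite IHl; ring].
Qed.

Lemma prodR_const1 {A} (l : list A) : Rprod_list (map (fun _ => 1) l) = 1.
Proof. induction l; auto. rewrite prodR_cons, IHl; ring. Qed.

Lemma exp_sumR_ln {A} (f : A -> R) l : (forall x, In x l -> 0 < f x) ->
  exp (sumR (fun x => ln (f x)) l) = Rprod_list (map f l).
Proof.
  induction l; intros H; [apply exp_0|].
  rewrite prodR_cons. unfold Rsum_list in *. simpl.
  rewrite exp_plus, exp_ln, IHl; auto; intros; apply H; simpl; auto.
Qed.

Lemma prodR_inv {A} (f : A -> R) l : (forall x, In x l -> 0 < f x) ->
  Rprod_list (map (fun x => 1 / f x) l) * Rprod_list (map f l) = 1.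
Proof.
  induction l; intros H; [unfold Rprod_list; simpl; ring|].
  rewrite !prodR_cons. assert (0 < f a) by (apply H; simpl; auto).
  transitivity ((f a / f a) * (Rprod_list (map (fun x => 1 / f x) l) * Rprod_list (map f l)));
    [field; lra|].
  rewrite IHl; [field; lra|]. intros; apply H; simpl; auto.
Qed.

(** * Elementary inequalities *)

Lemma ln_le_mono x y : 0 < x -> x <= y -> ln x <= ln y.
Proof. intros H1 [H2|<-]; [left; apply ln_increasing; auto | lra]. Qed.

Lemma ln1p_nonneg x : 0 <= x -> 0 <= ln (1 + x).
Proof. intros H. rewrite <- ln_1. apply ln_le_mono; lra. Qed.

Lemma ln1p_upper x : 0 <= x -> ln (1 + x) <= x.
Proof.
  intros H. rewrite <- (ln_exp x) at 2. apply ln_le_mono; [lra | apply exp_ineq1_le].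
Qed.

Lemma ln1p_lower x : 0 <= x -> x - x * x <= ln (1 + x).
Proof.
  intros H. set (z := / (1 + x)).
  assert (Hz : 0 < z) by (unfold z; apply Rinv_0_lt_compat; lra).
  assert (Hlnz : ln z <= z - 1).
  { rewrite <- (ln_exp (z - 1)). apply ln_le_mono; auto.
    pose proof (exp_ineq1_le (z - 1)); lra. }
  unfold z in Hlnz. rewrite ln_Rinv in Hlnz by lra.
  assert (x - x * x <= 1 - / (1 + x)).
  { apply Rmult_le_reg_r with (1 + x); [lra|].
    replace ((1 - / (1 + x)) * (1 + x)) with x by (field; lra). nra. }
  lra.
Qed.

Lemma div_nonneg a c : 0 <= a -> 0 < c -> 0 <= a / c.
Proof. intros; unfold Rdiv; apply Rmult_le_pos; auto; left; apply Rinv_0_lt_compat; auto. Qed.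

Lemma inv_sq_le_telescope m : (1 <= m)%nat ->
  / INR m * / INR m <= 2 * (/ INR m - / INR (S m)).
Proof.
  intros Hm. assert (HM : 1 <= INR m) by (apply le_INR in Hm; simpl in Hm; lra).
  rewrite S_INR.
  replace (2 * (/ INR m - / (INR m + 1))) with (/ INR m * (2 * / (INR m + 1)))
    by (field; lra).
  apply Rmult_le_compat_l; [left; apply Rinv_0_lt_compat; lra|].
  apply Rmult_le_reg_r with (INR m * (INR m + 1)); [nra|].
  replace (/ INR m * (INR m * (INR m + 1))) with (INR m + 1) by (field; lra).
  replace (2 * / (INR m + 1) * (INR m * (INR m + 1))) with (2 * INR m) by (field; lra).
  lra.
Qed.

(** * The random process *)

Definition Zn (b : R) (n : nat) : R := (2 + b) * INR n - 2.

Lemma Zn_lower b n : 0 < b -> (1 <= n)%nat -> b * INR n / 2 <= Zn b n.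
Proof. intros Hb Hn. unfold Zn. apply le_INR in Hn. simpl in Hn. nra. Qed.

Lemma Zn_pos b n : 0 < b -> (1 <= n)%nat -> 0 < Zn b n.
Proof.
  intros Hb Hn. pose proof (Zn_lower b n Hb Hn).
  apply le_INR in Hn. simpl in Hn. nra.
Qed.

Lemma inv_Zn_le b m : 0 < b -> (1 <= m)%nat -> / Zn b m <= (2 / b) * / INR m.
Proof.
  intros Hb Hm. pose proof (Zn_lower b m Hb Hm).
  assert (1 <= INR m) by (apply le_INR in Hm; simpl in Hm; lra).
  replace (2 / b * / INR m) with (/ (b * INR m / 2)) by (field; lra).
  apply Rinv_le_contravar; auto. nra.
Qed.

Definition valid_heads (n : nat) (hd : nat -> nat) :=
  forall i, (2 <= i <= n)%nat -> (1 <= hd i < i)%nat.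

(** In-degree of [u] in G^n, and degree (the tail half-edge counts for u >= 2). *)
Definition indeg (n : nat) (hd : nat -> nat) (u : nat) : nat :=
  length (filter (fun i => Nat.eqb (hd i) u) (seq 2 (n - 1))).
Definition deg n hd u : nat := ((if Nat.leb 2 u then 1 else 0) + indeg n hd u)%nat.

Lemma seq_1_n n : (1 <= n)%nat -> seq 1 n = 1%nat :: seq 2 (n - 1).
Proof. intros H. destruct n; [lia|]. simpl. rewrite Nat.sub_0_r; reflexivity. Qed.

Lemma sum_indeg n hd (g : nat -> R) : valid_heads n hd -> (1 <= n)%nat ->
  sumR (fun v => INR (indeg n hd v) * g v) (seq 1 n) = sumR (fun i => g (hd i)) (seq 2 (n - 1)).
Proof.
  intros Hv Hn. unfold indeg.
  rewrite (sumR_ext _ (fun v => sumR (fun i => if Nat.eqb (hd i) v then g v else 0) (seq 2 (n-1)))).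
  - rewrite sumR_exchange. apply sumR_ext. intros i Hi. apply in_seq in Hi.
    apply sumR_seq_point1. specialize (Hv i). lia.
  - intros v _. rewrite INR_count, Rmult_comm, <- sumR_scal. apply sumR_ext.
    intros i _. destruct (Nat.eqb (hd i) v); lra.
Qed.

Lemma sum_tail_halfedges (g : nat -> R) n : (1 <= n)%nat ->
  sumR (fun x => INR (if 2 <=? x then 1 else 0)%nat * g x) (seq 1 n) = sumR g (seq 2 (n - 1)).
Proof.
  intros Hn. rewrite (seq_1_n n Hn). unfold Rsum_list at 1. cbn [map fold_right].
  fold (Rsum_list (map (fun x => INR (if 2 <=? x then 1 else 0)%nat * g x) (seq 2 (n-1)))).
  rewrite (sumR_ext _ g); [simpl; lra|].
  intros x Hx; apply in_seq in Hx. destruct (Nat.leb_spec 2 x); [simpl; lra | lia].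
Qed.

(** The target of the new edge is v with probability (d_n(v)+beta)/N_n. *)
Lemma target_law b n hd (g : nat -> R) : 0 < b -> valid_heads n hd -> (1 <= n)%nat ->
  sumR (fun c => weight b n c * g (target hd c)) (Omega n) =
  sumR (fun v => (INR (deg n hd v) + b) / Zn b n * g v) (seq 1 n).
Proof.
  intros Hb Hv Hn. assert (HN : 0 < Zn b n) by (apply Zn_pos; auto).
  unfold Omega. rewrite !sumR_app, !sumR_map. unfold deg.
  rewrite (sumR_ext (fun v => (INR ((if 2 <=? v then 1 else 0) + indeg n hd v)%nat + b)
                               / Zn b n * g v)
                    (fun v => b / Zn b n * g v
       + / Zn b n * (INR (if 2 <=? v then 1 else 0)%nat * g v)
       + / Zn b n * (INR (indeg n hd v) * g v)))
    by (intros v _; rewrite plus_INR; field; lra).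
  rewrite !sumR_plus, !sumR_scal, sum_indeg, sum_tail_halfedges by auto.
  rewrite (sumR_ext (fun x => weight b n (CV x) * g x) (fun x => b / Zn b n * g x))
    by reflexivity.
  rewrite (sumR_ext (fun x => weight b n (CH x) * g (hd x)) (fun x => / Zn b n * g (hd x)))
    by (intros; simpl; unfold Rdiv; fold (Zn b n); lra).
  rewrite (sumR_ext (fun x => weight b n (CT x) * g x) (fun x => / Zn b n * g x))
    by (intros; simpl; unfold Rdiv; fold (Zn b n); lra).
  rewrite !sumR_scal. simpl. lra.
Qed.

Lemma target_range n hd c : valid_heads n hd -> In c (Omega n) -> (1 <= target hd c <= n)%nat.
Proof.
  intros Hv Hc. unfold Omega in Hc. rewrite !in_app_iff, !in_map_iff in Hc.
  destruct Hc as [[i [<- Hi]]|[[i [<- Hi]]|[i [<- Hi]]]]; apply in_seq in Hi; simpl; try lia.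
  specialize (Hv i ltac:(lia)). lia.
Qed.

Lemma valid_upd n hd v : valid_heads n hd -> (1 <= v <= n)%nat ->
  valid_heads (S n) (upd hd (S n) v).
Proof.
  intros Hv Hvn i Hi. unfold upd. destruct (Nat.eqb_spec i (S n)); [lia|]. apply Hv; lia.
Qed.

Lemma deg_upd n hd v u : (1 <= n)%nat -> valid_heads n hd ->
  deg (S n) (upd hd (S n) v) u = (deg n hd u + if Nat.eqb v u then 1 else 0)%nat.
Proof.
  intros Hn Hv. unfold deg, indeg. replace (S n - 1)%nat with ((n - 1) + 1)%nat by lia.
  rewrite seq_app, filter_app, length_app.
  rewrite (filter_ext_in _ (fun i => Nat.eqb (hd i) u)).
  2:{ intros i Hi; apply in_seq in Hi. unfold upd.
      destruct (Nat.eqb_spec i (S n)); [lia | reflexivity]. }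
  replace (2 + (n - 1))%nat with (S n) by lia. simpl. unfold upd. rewrite Nat.eqb_refl.
  destruct (Nat.eqb v u); simpl; lia.
Qed.

Lemma sum_deg n hd b : valid_heads n hd -> (1 <= n)%nat ->
  sumR (fun v => INR (deg n hd v) + b) (seq 1 n) = Zn b n.
Proof.
  intros Hv Hn. unfold deg.
  rewrite (sumR_ext _ (fun v => INR (if 2 <=? v then 1 else 0)%nat * 1
                               + INR (indeg n hd v) * 1 + b))
    by (intros; rewrite plus_INR; ring).
  rewrite !sumR_plus, sum_tail_halfedges, sum_indeg by auto.
  rewrite !sumR_const, !length_seq. unfold Zn. rewrite minus_INR by auto. simpl. ring.
Qed.

(** * The exact formula for Pr(S in G^t) *)

Fixpoint rising (D : R) (r : nat) : R :=
  match r with O => 1 | S r' => rising D r' * (D + INR r') end.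

Lemma rising_shift D r : rising (D + 1) r * D = rising D r * (D + INR r).
Proof.
  induction r; simpl; [lra|].
  transitivity (rising (D + 1) r * D * (D + 1 + INR r)); [ring|].
  rewrite IHr. destruct r; simpl; ring.
Qed.

Definition pending (F : forest) n u : nat :=
  length (filter (fun e => andb (Nat.eqb (snd e) u) (Nat.ltb n (fst e))) F).

Definition realized (F : forest) n (hd : nat -> nat) : bool :=
  forallb (fun e => orb (negb (Nat.leb (fst e) n)) (Nat.eqb (hd (fst e)) (snd e))) F.

(** The quantity X_n of the strategy: its expectation evolves deterministically. *)
Definition pending_factor b F n hd : R :=
  Rprod_list (map (fun u => rising (INR (deg n hd u) + b) (pending F n u)) (seq 1 (smax F))).
Definition mart b F n hd : R := (if realized F n hd then 1 else 0) * pending_factor b F n hd.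

Definition crossing (F : forest) n : nat :=
  length (filter (fun e => andb (Nat.leb (snd e) n) (Nat.ltb n (fst e))) F).
Definition is_tail (F : forest) m : bool := existsb (fun e => Nat.eqb (fst e) m) F.

Definition growth b F n : R :=
  if is_tail F (S n) then 1 / Zn b n else 1 + INR (crossing F n) / Zn b n.

Lemma smax_ge F e : In e F -> (fst e <= smax F)%nat /\ (snd e <= smax F)%nat.
Proof.
  induction F; simpl; intros H; [contradiction|].
  destruct H as [<-|H]; [lia | specialize (IHF H); lia].
Qed.

Lemma tail_unique (F : forest) a c : NoDup (map fst F) -> In (a, c) F ->
  forall e, In e F -> fst e = a -> e = (a, c).
Proof.
  induction F as [|x l IH]; simpl; intros Hnd Hin e He Hfe; [contradiction|].
  inversion Hnd as [|x0 l0 Hni Hnd']. subst x0 l0.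
  destruct Hin as [Hx|Hin]; destruct He as [He|He].
  - congruence.
  - exfalso. apply Hni. rewrite Hx. simpl. rewrite <- Hfe. apply in_map; auto.
  - exfalso. apply Hni. rewrite He, Hfe. change a with (fst (a, c)). apply in_map; auto.
  - apply IH; auto.
Qed.

Lemma is_tail_false F m : is_tail F m = false -> forall e, In e F -> fst e <> m.
Proof.
  intros H e He Heq. unfold is_tail in H.
  assert (existsb (fun e => Nat.eqb (fst e) m) F = true)
    by (apply existsb_exists; exists e; split; auto; apply Nat.eqb_eq; auto).
  congruence.
Qed.

Lemma is_tail_true F m : is_tail F m = true -> exists w, In (m, w) F.
Proof.
  intros H. apply existsb_exists in H. destruct H as [[x y] [H1 H2]].
  apply Nat.eqb_eq in H2. simpl in H2; subst. eauto.
Qed.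

Lemma pending_big F n v : (smax F < v)%nat -> pending F n v = 0%nat.
Proof.
  intros H. unfold pending. rewrite (filter_ext_in _ (fun _ => false)).
  - clear H. induction F; simpl; auto.
  - intros e He. destruct (smax_ge F e He). destruct (Nat.eqb_spec (snd e) v); [lia|auto].
Qed.

Lemma pending_split F n u : INR (pending F n u) =
  INR (pending F (S n) u)
  + sumR (fun e => if andb (Nat.eqb (snd e) u) (Nat.eqb (fst e) (S n)) then 1 else 0) F.
Proof.
  unfold pending. rewrite !INR_count, <- sumR_plus. apply sumR_ext. intros e _.
  destruct (Nat.eqb (snd e) u); simpl; [|lra].
  destruct (Nat.ltb_spec n (fst e)); destruct (Nat.ltb_spec (S n) (fst e));
  destruct (Nat.eqb_spec (fst e) (S n)); simpl; try lra; lia.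
Qed.

Lemma pending_notail F n u : is_tail F (S n) = false -> pending F (S n) u = pending F n u.
Proof.
  intros H. apply INR_eq. rewrite (pending_split F n u), (sumR_ext _ (fun _ => 0)), sumR_zero;
    [lra|].
  intros e He. pose proof (is_tail_false F (S n) H e He).
  destruct (Nat.eqb_spec (fst e) (S n)); [lia|]. destruct (Nat.eqb (snd e) u); reflexivity.
Qed.

Lemma pending_tail F n w u : possible_forest F -> In (S n, w) F ->
  INR (pending F n u) = INR (pending F (S n) u) + if Nat.eqb w u then 1 else 0.
Proof.
  intros [Hnd [_ Hnf]] Hin. rewrite (pending_split F n u). f_equal.
  rewrite (sumR_single _ F (S n, w)); auto.
  - simpl. rewrite Nat.eqb_refl. destruct (Nat.eqb w u); reflexivity.
  - intros e He Hne. destruct (Nat.eqb_spec (fst e) (S n)).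
    + exfalso; apply Hne. eapply tail_unique; eauto.
    + destruct (Nat.eqb (snd e) u); reflexivity.
Qed.

Lemma realized_iff F n hd : realized F n hd = true <->
  forall e, In e F -> (fst e <= n)%nat -> hd (fst e) = snd e.
Proof.
  unfold realized; rewrite forallb_forall. split; intros H e He.
  - intros Hle. specialize (H e He). apply Bool.orb_true_iff in H. destruct H as [H|H].
    + apply Bool.negb_true_iff, Nat.leb_gt in H; lia.
    + apply Nat.eqb_eq; auto.
  - apply Bool.orb_true_iff. destruct (Nat.leb_spec (fst e) n); [|left; reflexivity].
    right. apply Nat.eqb_eq, H; auto.
Qed.

Lemma realized_notail F n hd v : is_tail F (S n) = false ->
  realized F (S n) (upd hd (S n) v) = realized F n hd.
Proof.
  intros H. apply Bool.eq_iff_eq_true. rewrite !realized_iff.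
  split; intros Hs e He Hle; pose proof (is_tail_false F (S n) H e He); unfold upd in *.
  - rewrite <- Hs by (auto; lia). destruct (Nat.eqb_spec (fst e) (S n)); [lia | auto].
  - destruct (Nat.eqb_spec (fst e) (S n)); [lia|]. apply Hs; auto; lia.
Qed.

Lemma realized_tail F n hd v w : possible_forest F -> In (S n, w) F ->
  realized F (S n) (upd hd (S n) v) = andb (realized F n hd) (Nat.eqb v w).
Proof.
  intros [Hnd [Hf Hnf]] Hin. apply Bool.eq_iff_eq_true.
  rewrite Bool.andb_true_iff, !realized_iff, Nat.eqb_eq. split.
  - intros Hs. split.
    + intros e He Hle. specialize (Hs e He ltac:(lia)). unfold upd in Hs.
      destruct (Nat.eqb_spec (fst e) (S n)); [lia | auto].
    + specialize (Hs _ Hin ltac:(simpl; lia)). unfold upd in Hs. simpl in Hs.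
      rewrite Nat.eqb_refl in Hs. auto.
  - intros [Hs ->] e He Hle. unfold upd. destruct (Nat.eqb_spec (fst e) (S n)) as [E|E].
    + rewrite (tail_unique F (S n) w Hnf Hin e He E). reflexivity.
    + apply Hs; auto; lia.
Qed.

Lemma sum_pending F n : possible_forest F ->
  sumR (fun v => INR (pending F n v)) (seq 1 n) = INR (crossing F n).
Proof.
  intros [_ [Hf _]]. unfold pending, crossing.
  rewrite (sumR_ext _ (fun v => sumR (fun e => if Nat.eqb (snd e) v
                          then (if Nat.ltb n (fst e) then 1 else 0) else 0) F)).
  2:{ intros v _. rewrite INR_count. apply sumR_ext. intros e _.
      destruct (Nat.eqb (snd e) v); destruct (Nat.ltb n (fst e)); reflexivity. }
  rewrite sumR_exchange, INR_count. apply sumR_ext. intros e He.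
  rewrite sumR_seq_point. specialize (Hf e He).
  destruct (Nat.leb_spec (snd e) n); destruct (Nat.leb_spec 1 (snd e));
    destruct (Nat.ltb_spec (snd e) (1 + n)); simpl; auto; lia.
Qed.

(** Attaching v_{n+1} to a vertex v that is not the endpoint of the edge
    born at n+1 multiplies X by (d+beta+r)/(d+beta): one more factor of
    the rising factorial becomes available. *)
Lemma pending_factor_upd b F n hd v : 0 < b -> (1 <= n)%nat -> valid_heads n hd ->
  (1 <= v)%nat -> (forall u, pending F (S n) u = pending F n u) ->
  pending_factor b F (S n) (upd hd (S n) v) =
  pending_factor b F n hd * ((INR (deg n hd v) + b + INR (pending F n v)) / (INR (deg n hd v) + b)).
Proof.
  intros Hb Hn Hv Hv1 Hr. unfold pending_factor.
  assert (HD : 0 < INR (deg n hd v) + b) by (pose proof (pos_INR (deg n hd v)); lra).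
  destruct (le_lt_dec v (smax F)) as [Hvm|Hvm].
  - apply prodR_change_one with v; [apply seq_NoDup | apply in_seq; lia | |].
    + intros u _ Hu. rewrite deg_upd, Hr by auto.
      destruct (Nat.eqb_spec v u); [congruence | rewrite Nat.add_0_r; reflexivity].
    + rewrite deg_upd, Hr, Nat.eqb_refl, plus_INR by auto.
      set (D := INR (deg n hd v) + b).
      replace (INR (deg n hd v) + INR 1 + b) with (D + 1) by (unfold D; simpl; ring).
      apply Rmult_eq_reg_r with D; [|unfold D; lra].
      rewrite rising_shift. field. unfold D; lra.
  - rewrite (pending_big F n v Hvm), Rplus_0_r, Rdiv_diag, Rmult_1_r by lra.
    apply prodR_ext. intros u Hu. apply in_seq in Hu.
    rewrite deg_upd, Hr by auto. destruct (Nat.eqb_spec v u); [lia | rewrite Nat.add_0_r; auto].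
Qed.

Lemma pending_factor_upd_tail b F n hd w : 0 < b -> (1 <= n)%nat -> valid_heads n hd ->
  (1 <= w <= smax F)%nat ->
  (forall u, u <> w -> pending F (S n) u = pending F n u) ->
  pending F n w = S (pending F (S n) w) ->
  pending_factor b F (S n) (upd hd (S n) w) = pending_factor b F n hd * / (INR (deg n hd w) + b).
Proof.
  intros Hb Hn Hv Hw Hr Hrw. unfold pending_factor.
  assert (HD : 0 < INR (deg n hd w) + b) by (pose proof (pos_INR (deg n hd w)); lra).
  apply prodR_change_one with w; [apply seq_NoDup | apply in_seq; lia | |].
  - intros u _ Hu. rewrite deg_upd, Hr by auto.
    destruct (Nat.eqb_spec w u); [congruence | rewrite Nat.add_0_r; reflexivity].
  - rewrite deg_upd, Nat.eqb_refl, plus_INR, Hrw by auto.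
    set (D := INR (deg n hd w) + b).
    replace (INR (deg n hd w) + INR 1 + b) with (D + 1) by (unfold D; simpl; ring).
    cbn [rising]. apply Rmult_eq_reg_r with D; [|unfold D; lra].
    rewrite rising_shift. field. unfold D; lra.
Qed.

(** One step when v_{n+1} is the tail of an edge (n+1, w) of F: only the
    choice of w keeps S realizable, and it occurs with probability
    (d_n(w)+beta)/N_n, exactly cancelling the consumed factor. *)
Lemma step_tail b F n hd w : 0 < b -> possible_forest F -> (1 <= n)%nat ->
  valid_heads n hd -> In (S n, w) F ->
  sumR (fun v => (INR (deg n hd v) + b) / Zn b n * mart b F (S n) (upd hd (S n) v)) (seq 1 n) =
  mart b F n hd * (1 / Zn b n).
Proof.
  intros Hb HF Hn Hv Hw. assert (HN : 0 < Zn b n) by (apply Zn_pos; auto).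
  pose proof HF as [_ [Hf _]]. pose proof (Hf _ Hw) as Hw1. simpl in Hw1.
  pose proof (smax_ge F _ Hw) as Hw2. simpl in Hw2.
  rewrite (sumR_single _ _ w); [| apply seq_NoDup | apply in_seq; lia |].
  - unfold mart. rewrite (realized_tail F n hd w w HF Hw), Nat.eqb_refl, Bool.andb_true_r.
    rewrite (pending_factor_upd_tail b F n hd w); auto; try lia.
    + assert (0 < INR (deg n hd w) + b) by (pose proof (pos_INR (deg n hd w)); lra).
      field. lra.
    + intros u Hu. apply INR_eq. rewrite (pending_tail F n w u HF Hw).
      destruct (Nat.eqb_spec w u); [congruence | lra].
    + apply INR_eq. rewrite (pending_tail F n w w HF Hw), Nat.eqb_refl, S_INR. lra.
  - intros v _ Hvw. unfold mart. rewrite (realized_tail F n hd v w HF Hw).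
    destruct (Nat.eqb_spec v w); [congruence|]. rewrite Bool.andb_false_r. lra.
Qed.

(** One step when v_{n+1} is not a tail of F: summing the gains
    (d+beta+r)/(d+beta) against the attachment law gives 1 + c_n/N_n. *)
Lemma step_notail b F n hd : 0 < b -> possible_forest F -> (1 <= n)%nat ->
  valid_heads n hd -> is_tail F (S n) = false ->
  sumR (fun v => (INR (deg n hd v) + b) / Zn b n * mart b F (S n) (upd hd (S n) v)) (seq 1 n) =
  mart b F n hd * (1 + INR (crossing F n) / Zn b n).
Proof.
  intros Hb HF Hn Hv Ht. assert (HN : 0 < Zn b n) by (apply Zn_pos; auto).
  unfold mart at 2. set (s := if realized F n hd then 1 else 0).
  rewrite (sumR_ext _ (fun v => s * pending_factor b F n hd / Zn b n
                               * ((INR (deg n hd v) + b) + INR (pending F n v)))).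
  - rewrite sumR_scal, sumR_plus, sum_deg, sum_pending by auto. field. lra.
  - intros v Hv'. apply in_seq in Hv'. unfold mart. rewrite realized_notail by auto. fold s.
    rewrite pending_factor_upd; auto; try lia; [|intros; apply pending_notail; auto].
    assert (0 < INR (deg n hd v) + b) by (pose proof (pos_INR (deg n hd v)); lra).
    field. lra.
Qed.

Lemma step b F n hd : 0 < b -> possible_forest F -> (1 <= n)%nat -> valid_heads n hd ->
  sumR (fun c => weight b n c * mart b F (S n) (upd hd (S n) (target hd c))) (Omega n) =
  mart b F n hd * growth b F n.
Proof.
  intros Hb HF Hn Hv.
  rewrite (target_law b n hd (fun v => mart b F (S n) (upd hd (S n) v))) by auto.
  unfold growth. destruct (is_tail F (S n)) eqn:Et.
  - destruct (is_tail_true F (S n) Et) as [w Hw]. apply step_tail with w; auto.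
  - apply step_notail; auto.
Qed.

Lemma expect_mart b F k : forall n hd, 0 < b -> possible_forest F -> (1 <= n)%nat ->
  valid_heads n hd ->
  expect b k n hd (mart b F (n + k)) = mart b F n hd * Rprod_list (map (growth b F) (seq n k)).
Proof.
  induction k; intros n hd Hb HF Hn Hv.
  - simpl. rewrite Nat.add_0_r. unfold Rprod_list; simpl; ring.
  - cbn [expect]. replace (n + S k)%nat with (S n + k)%nat by lia.
    rewrite (sumR_ext _ (fun c => Rprod_list (map (growth b F) (seq (S n) k)) *
         (weight b n c * mart b F (S n) (upd hd (S n) (target hd c))))).
    + rewrite sumR_scal, step by auto. cbn [seq]. rewrite prodR_cons. ring.
    + intros c Hc. rewrite IHk; [ring | auto | auto | lia |].
      apply valid_upd, target_range; auto.
Qed.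

Lemma expect_ext b k : forall n hd (F1 F2 : (nat -> nat) -> R), (forall h, F1 h = F2 h) ->
  expect b k n hd F1 = expect b k n hd F2.
Proof.
  induction k; intros n hd F1 F2 H; simpl; auto.
  f_equal. apply map_ext. intros c. f_equal. apply IHk; auto.
Qed.

Lemma mart_final b F t hd : possible_forest F -> (smax F <= t)%nat ->
  mart b F t hd = if contained F hd then 1 else 0.
Proof.
  intros HF Ht. unfold mart, pending_factor.
  rewrite (prodR_ext _ (fun _ => 1)), prodR_const1.
  - replace (realized F t hd) with (contained F hd); [destruct (contained F hd); ring|].
    apply Bool.eq_iff_eq_true. rewrite realized_iff. unfold contained. rewrite forallb_forall.
    split; intros H e He.
    + intros _. apply Nat.eqb_eq, H; auto.
    + apply Nat.eqb_eq, H; auto. destruct (smax_ge F e He); lia.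
  - intros u _. replace (pending F t u) with 0%nat; auto. unfold pending.
    rewrite (filter_ext_in _ (fun _ => false)); [clear; induction F; simpl; auto|].
    intros e He. destruct (smax_ge F e He). destruct (Nat.ltb_spec t (fst e)); [lia|].
    apply Bool.andb_false_r.
Qed.

Lemma rising_beta b d : 0 < b -> rising b d = b / (INR d + b) * gamma_ratio b d.
Proof.
  intros Hb. induction d; [simpl; field; lra|].
  cbn [rising gamma_ratio]. rewrite IHd, S_INR. pose proof (pos_INR d). field. lra.
Qed.

Lemma rising_1_beta b d : rising (1 + b) d = gamma_ratio b d.
Proof. induction d; simpl; auto. rewrite IHd. f_equal. destruct d; simpl; ring. Qed.

Lemma din_big F v : (smax F < v)%nat -> din F v = 0%nat.
Proof.
  intros H. unfold din. rewrite (filter_ext_in _ (fun _ => false)).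
  - clear H. induction F; simpl; auto.
  - intros e He. destruct (smax_ge F e He). apply Nat.eqb_neq; lia.
Qed.

(** At time 1 every edge is pending: X_1 is the Gamma-product of the main term
    (v_1 has degree 0, every other vertex degree 1). *)
Lemma mart_initial b F : 0 < b -> possible_forest F ->
  mart b F 1 (fun _ => 0%nat) =
  b / (INR (din F 1) + b) * Rprod_list (map (fun v => gamma_ratio b (din F v)) (Vminus F)).
Proof.
  intros Hb [Hnd [Hf Hnf]]. unfold mart.
  replace (realized F 1 (fun _ => 0%nat)) with true.
  2:{ symmetry; apply realized_iff. intros e He Hle. specialize (Hf e He); lia. }
  unfold pending_factor, Vminus. rewrite prodR_filter.
  rewrite (prodR_ext (fun u => rising (INR (deg 1 (fun _ => 0%nat) u) + b) (pending F 1 u))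
     (fun u => rising (INR (if 2 <=? u then 1 else 0)%nat + b) (din F u))).
  2:{ intros u _. f_equal.
      - unfold deg, indeg. simpl. rewrite Nat.add_0_r. reflexivity.
      - unfold pending, din. f_equal. apply filter_ext_in. intros e He. specialize (Hf e He).
        destruct (Nat.ltb_spec 1 (fst e)); [apply Bool.andb_true_r | lia]. }
  rewrite (prodR_ext (fun x => if 0 <? din F x then gamma_ratio b (din F x) else 1)
       (fun x => gamma_ratio b (din F x)))
    by (intros x _; destruct (din F x); simpl; auto).
  destruct (smax F) eqn:EM.
  - simpl. rewrite din_big by lia. simpl. unfold Rprod_list; simpl. field. lra.
  - rewrite seq_1_n by lia. rewrite !prodR_cons. simpl (2 <=? 1). simpl (INR 0).
    rewrite Rplus_0_l, rising_beta by auto.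
    rewrite (prodR_ext _ (fun x => gamma_ratio b (din F x)) (seq 2 (S n - 1))); [ring|].
    intros x Hx. apply in_seq in Hx. destruct (Nat.leb_spec 2 x); [|lia].
    simpl. apply rising_1_beta.
Qed.

Lemma prob_formula b F t : 0 < b -> possible_forest F -> (1 <= t)%nat -> (smax F <= t)%nat ->
  prob_sub b F t = mart b F 1 (fun _ => 0%nat) * Rprod_list (map (growth b F) (seq 1 (t - 1))).
Proof.
  intros Hb HF Ht Hm. unfold prob_sub.
  rewrite (expect_ext b (t - 1) 1 _ _ (mart b F (1 + (t - 1)))).
  - apply expect_mart; auto. intros i Hi; lia.
  - intros h. rewrite mart_final; auto. lia.
Qed.

(** * Logarithmic estimates *)

Definition ind (p : bool) : R := if p then 1 else 0.

Definition cross (e : nat * nat) (m : nat) : bool := andb (Nat.leb (snd e) m) (Nat.ltb m (fst e)).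

(** y_m = c_m/N_m, the first-order part of ln M_m. *)
Definition yrate b F m : R := INR (crossing F m) / Zn b m.

Definition tail_at (F : forest) m : R := sumR (fun e => if Nat.eqb (fst e) (S m) then 1 else 0) F.

Definition edge_scale b (e : nat * nat) : R :=
  Rpower (Rpower (INR (fst e)) (1 + b) * INR (snd e)) (1 / (2 + b)).

Definition edge_harmonic b (e : nat * nat) : R :=
  sumR (fun m => 1 / Zn b m) (seq (snd e) (fst e - snd e)).

Definition expo b : R := 1 / (2 + b).

Lemma expo_range b : 0 < b -> 0 < expo b <= 1 / 2.
Proof.
  intros Hb. unfold expo. split; [apply Rdiv_lt_0_compat; lra|].
  apply Rmult_le_reg_r with (2 + b); [lra|].
  unfold Rdiv. rewrite Rmult_assoc, Rinv_l by lra. lra.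
Qed.

Lemma yrate_nonneg b F m : 0 < b -> (1 <= m)%nat -> 0 <= yrate b F m.
Proof. intros. apply div_nonneg; [apply pos_INR | apply Zn_pos; auto]. Qed.

Lemma yrate_sum b F m : yrate b F m = sumR (fun e => ind (cross e m) * / Zn b m) F.
Proof.
  unfold yrate, crossing. rewrite INR_count. unfold Rdiv. rewrite Rmult_comm, <- sumR_scal.
  apply sumR_ext; intros e _. unfold ind, cross. destruct (_ && _)%bool; ring.
Qed.

(** By out-degree <= 1, at most one edge has tail m+1. *)
Lemma tail_at_is_tail F m : possible_forest F -> tail_at F m = if is_tail F (S m) then 1 else 0.
Proof.
  intros [Hnd [Hf Hnf]]. unfold tail_at. destruct (is_tail F (S m)) eqn:E.
  - destruct (is_tail_true F _ E) as [w Hw]. rewrite (sumR_single _ _ (S m, w)); auto.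
    + simpl; rewrite Nat.eqb_refl; auto.
    + intros e He Hne. destruct (Nat.eqb_spec (fst e) (S m)); auto.
      exfalso; apply Hne; eapply tail_unique; eauto.
  - rewrite (sumR_ext _ (fun _ => 0)); [apply sumR_zero|].
    intros e He. pose proof (is_tail_false F _ E e He).
    destruct (Nat.eqb_spec (fst e) (S m)); [lia | auto].
Qed.

Lemma sum_yrate b F t : possible_forest F -> (smax F <= t)%nat ->
  sumR (fun m => yrate b F m) (seq 1 (t - 1)) = sumR (fun e => edge_harmonic b e) F.
Proof.
  intros [Hnd [Hf Hnf]] Ht. unfold yrate, crossing.
  rewrite (sumR_ext _ (fun m => sumR (fun e => if cross e m then 1 / Zn b m else 0) F)).
  2:{ intros m _. rewrite INR_count. unfold Rdiv. rewrite Rmult_comm, <- sumR_scal.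
      apply sumR_ext. intros e _. unfold cross. destruct (_ && _)%bool; lra. }
  rewrite sumR_exchange. apply sumR_ext. intros e He. unfold edge_harmonic, cross.
  specialize (Hf e He). destruct (smax_ge F e He).
  rewrite (sumR_interval (fun m => 1 / Zn b m) 1 (t - 1) (snd e) (fst e)); auto; lia.
Qed.

Lemma sum_tail_ln b F t : possible_forest F -> (smax F <= t)%nat ->
  sumR (fun m => tail_at F m * ln (Zn b m)) (seq 1 (t - 1)) =
  sumR (fun e => ln (Zn b (fst e - 1))) F.
Proof.
  intros [Hnd [Hf Hnf]] Ht. unfold tail_at.
  rewrite (sumR_ext _ (fun m => sumR (fun e => if Nat.eqb (fst e - 1) m then ln (Zn b m) else 0) F)).
  2:{ intros m Hm. rewrite Rmult_comm, <- sumR_scal. apply sumR_ext. intros e He.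
      specialize (Hf e He). apply in_seq in Hm.
      destruct (Nat.eqb_spec (fst e) (S m)); destruct (Nat.eqb_spec (fst e - 1) m); try lra; lia. }
  rewrite sumR_exchange. apply sumR_ext. intros e He.
  specialize (Hf e He). destruct (smax_ge F e He).
  rewrite sumR_seq_point.
  destruct (Nat.leb_spec 1 (fst e - 1)); destruct (Nat.ltb_spec (fst e - 1) (1 + (t - 1)));
    simpl; auto; lia.
Qed.

Lemma ln_edge_scale b e : 0 < b -> (1 <= snd e)%nat -> (1 <= fst e)%nat ->
  ln ((2 + b) * edge_scale b e) =
  ln (2 + b) + expo b * ((1 + b) * ln (INR (fst e)) + ln (INR (snd e))).
Proof.
  intros Hb H1 H2. unfold edge_scale, expo.
  rewrite ln_mult by (try lra; unfold Rpower; apply exp_pos).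
  rewrite ln_Rpower, ln_mult, ln_Rpower; [ring | unfold Rpower; apply exp_pos |].
  apply lt_0_INR; lia.
Qed.

Lemma ln_Zn_pred_bound b i : 0 < b -> (2 <= i)%nat ->
  0 <= ln ((2 + b) * INR i) - ln (Zn b (i - 1)) <= 4 * (4 + b) / b * / INR i.
Proof.
  intros Hb Hi. assert (HI : 2 <= INR i) by (apply le_INR in Hi; simpl in Hi; lra).
  assert (HN : Zn b (i - 1) = (2 + b) * INR i - (4 + b))
    by (unfold Zn; rewrite minus_INR by lia; simpl; ring).
  assert (HNp : b * INR i / 4 <= Zn b (i - 1)) by (rewrite HN; nra).
  assert (HNq : 0 < Zn b (i - 1)) by (assert (0 < b * INR i / 4) by nra; lra).
  set (x := (4 + b) / Zn b (i - 1)).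
  assert (Hx : 0 <= x) by (apply div_nonneg; lra).
  replace ((2 + b) * INR i) with (Zn b (i - 1) * (1 + x)) by (unfold x; field_simplify; lra).
  rewrite ln_mult by lra.
  replace (ln (Zn b (i - 1)) + ln (1 + x) - ln (Zn b (i - 1))) with (ln (1 + x)) by ring.
  split; [apply ln1p_nonneg; auto|].
  eapply Rle_trans; [apply ln1p_upper; auto|]. unfold x.
  replace (4 * (4 + b) / b * / INR i) with ((4 + b) * / (b * INR i / 4)) by (field; lra).
  unfold Rdiv. apply Rmult_le_compat_l; [lra|].
  apply Rinv_le_contravar; auto. nra.
Qed.

Definition tau b m : R := 1 / Zn b m - expo b * (ln (INR (S m)) - ln (INR m)).

Lemma Zn_expo_gap b m : 0 < b -> (1 <= m)%nat ->
  0 <= / Zn b m - expo b * / INR m <= 2 / b * (/ INR m * / INR m).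
Proof.
  intros Hb Hm. assert (HM : 1 <= INR m) by (apply le_INR in Hm; simpl in Hm; lra).
  pose proof (Zn_lower b m Hb Hm) as HNl. pose proof (Zn_pos b m Hb Hm).
  replace (/ Zn b m - expo b * / INR m) with (2 / (Zn b m * (2 + b) * INR m))
    by (unfold expo, Zn in *; field; repeat split; lra).
  assert (0 < Zn b m * (2 + b) * INR m)
    by (apply Rmult_lt_0_compat; [apply Rmult_lt_0_compat|]; lra).
  split; [apply div_nonneg; lra|].
  replace (2 / b * (/ INR m * / INR m)) with (2 * / (b * INR m * INR m)) by (field; lra).
  unfold Rdiv. apply Rmult_le_compat_l; [lra|]. apply Rinv_le_contravar.
  { apply Rmult_lt_0_compat; [apply Rmult_lt_0_compat|]; lra. }
  apply Rmult_le_compat_r; [lra|].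
  assert (0 <= b * INR m / 2) by (apply div_nonneg; [apply Rmult_le_pos|]; lra).
  assert (b * INR m / 2 * 2 <= Zn b m * (2 + b)) by (apply Rmult_le_compat; lra). lra.
Qed.

Lemma tau_bound b m : 0 < b -> (1 <= m)%nat ->
  0 <= tau b m <= (1 + 4 / b) * (/ INR m - / INR (S m)).
Proof.
  intros Hb Hm. assert (HM : 1 <= INR m) by (apply le_INR in Hm; simpl in Hm; lra).
  set (x := / INR m).
  assert (Hx : 0 < x) by (apply Rinv_0_lt_compat; lra).
  assert (Hln : ln (INR (S m)) - ln (INR m) = ln (1 + x)).
  { replace (INR (S m)) with (INR m * (1 + x)) by (unfold x; rewrite S_INR; field; lra).
    rewrite ln_mult by lra. ring. }
  unfold tau. rewrite Hln. unfold Rdiv at 1. rewrite Rmult_1_l.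
  pose proof (ln1p_upper x ltac:(lra)). pose proof (ln1p_lower x ltac:(lra)).
  pose proof (expo_range b Hb). pose proof (Zn_expo_gap b m Hb Hm) as Hgap.
  pose proof (inv_sq_le_telescope m Hm) as Htel. fold x in Hgap, Htel.
  assert (0 < / b) by (apply Rinv_0_lt_compat; lra).
  set (y := / INR (S m)) in *.
  split.
  - assert (expo b * ln (1 + x) <= expo b * x) by (apply Rmult_le_compat_l; lra). lra.
  - assert (expo b * (x - x * x) <= expo b * ln (1 + x)) by (apply Rmult_le_compat_l; lra).
    assert (expo b * (x * x) <= / 2 * (x * x)) by (apply Rmult_le_compat_r; nra).
    assert (2 / b * (x * x) <= 2 / b * (2 * (x - y)))
      by (apply Rmult_le_compat_l; [apply div_nonneg|]; lra).
    replace ((1 + 4 / b) * (x - y)) with (2 / b * (2 * (x - y)) + / 2 * (2 * (x - y)))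
      by (field; lra).
    lra.
Qed.

Lemma edge_harmonic_vs_ln b e : (snd e <= fst e)%nat ->
  edge_harmonic b e - expo b * (ln (INR (fst e)) - ln (INR (snd e))) =
  sumR (tau b) (seq (snd e) (fst e - snd e)).
Proof.
  intros H. unfold edge_harmonic, tau. rewrite sumR_minus, sumR_scal.
  rewrite (sumR_telescope (fun m => ln (INR m))).
  replace (snd e + (fst e - snd e))%nat with (fst e) by lia. reflexivity.
Qed.

Lemma sum_tau_bound b e : 0 < b -> (1 <= snd e)%nat -> (snd e <= fst e)%nat ->
  0 <= sumR (tau b) (seq (snd e) (fst e - snd e)) <= (1 + 4 / b) * / INR (snd e).
Proof.
  intros Hb H1 H2. split.
  - apply sumR_nonneg. intros m Hm; apply in_seq in Hm. apply tau_bound; auto; lia.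
  - eapply Rle_trans.
    + apply sumR_le with (g := fun m => (1 + 4 / b) * (/ INR m - / INR (S m))).
      intros m Hm; apply in_seq in Hm. apply tau_bound; auto; lia.
    + rewrite sumR_scal, sumR_telescope_inv.
      replace (snd e + (fst e - snd e))%nat with (fst e) by lia.
      apply Rmult_le_compat_l; [assert (0 < 4 / b) by (apply Rdiv_lt_0_compat; lra); lra|].
      assert (0 < / INR (fst e)) by (apply Rinv_0_lt_compat, lt_0_INR; lia). lra.
Qed.

Definition edge_const b : R := 4 * (4 + b) / b + (1 + 4 / b).

Lemma edge_bound b e : 0 < b -> (1 <= snd e)%nat -> (snd e < fst e)%nat ->
  Rabs (edge_harmonic b e - ln (Zn b (fst e - 1)) + ln ((2 + b) * edge_scale b e))
  <= edge_const b * / INR (snd e).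
Proof.
  intros Hb H1 H2. rewrite ln_edge_scale by (auto; lia).
  replace (edge_harmonic b e - ln (Zn b (fst e - 1)) +
     (ln (2 + b) + expo b * ((1 + b) * ln (INR (fst e)) + ln (INR (snd e)))))
   with ((ln ((2 + b) * INR (fst e)) - ln (Zn b (fst e - 1))) +
         (edge_harmonic b e - expo b * (ln (INR (fst e)) - ln (INR (snd e))))).
  2:{ rewrite ln_mult; [unfold expo; field | lra | apply lt_0_INR; lia]. lra. }
  rewrite edge_harmonic_vs_ln by lia.
  pose proof (ln_Zn_pred_bound b (fst e) Hb ltac:(lia)).
  pose proof (sum_tau_bound b e Hb H1 ltac:(lia)).
  assert (/ INR (fst e) <= / INR (snd e))
    by (apply Rinv_le_contravar; [apply lt_0_INR; lia | apply le_INR; lia]).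
  assert (0 < 4 * (4 + b) / b) by (apply Rdiv_lt_0_compat; lra).
  assert (4 * (4 + b) / b * / INR (fst e) <= 4 * (4 + b) / b * / INR (snd e))
    by (apply Rmult_le_compat_l; lra).
  rewrite Rabs_right by lra. unfold edge_const. lra.
Qed.

Definition delta b F m : R := ln (growth b F m) - yrate b F m + tail_at F m * ln (Zn b m).

Lemma delta_bound b F m : 0 < b -> possible_forest F -> (1 <= m)%nat ->
  Rabs (delta b F m) <= yrate b F m * yrate b F m + tail_at F m * yrate b F m.
Proof.
  intros Hb HF Hm. pose proof (yrate_nonneg b F m Hb Hm) as Hy. pose proof (Zn_pos b m Hb Hm).
  unfold delta. rewrite tail_at_is_tail by auto. unfold growth. destruct (is_tail F (S m)).
  - unfold Rdiv. rewrite Rmult_1_l, ln_Rinv by auto.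
    replace (- ln (Zn b m) - yrate b F m + 1 * ln (Zn b m)) with (- yrate b F m) by ring.
    rewrite Rabs_Ropp, Rabs_right by lra. nra.
  - fold (yrate b F m). pose proof (ln1p_upper _ Hy). pose proof (ln1p_lower _ Hy).
    rewrite Rabs_left1 by lra. lra.
Qed.

Lemma growth_pos b F m : 0 < b -> (1 <= m)%nat -> 0 < growth b F m.
Proof.
  intros Hb Hm. pose proof (Zn_pos b m Hb Hm). pose proof (yrate_nonneg b F m Hb Hm).
  unfold growth, yrate in *. destruct (is_tail F (S m)); [apply Rdiv_lt_0_compat|]; lra.
Qed.

(** * The pair sum D(S) controls all errors *)

(** Weight of a pair of edges crossing a common point: 1/max(heads). *)
Definition pair_weight (e e' : nat * nat) : R :=
  let mu := Nat.max (snd e) (snd e') in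
  if andb (Nat.leb 1 mu) (Nat.ltb mu (Nat.min (fst e) (fst e'))) then / INR mu else 0.

Definition pair_sum (F : forest) : R := sumR (fun e => sumR (fun e' => pair_weight e e') F) F.

Lemma pair_weight_nonneg e e' : 0 <= pair_weight e e'.
Proof.
  unfold pair_weight. destruct (Nat.leb_spec 1 (Nat.max (snd e) (snd e'))); simpl; [|lra].
  destruct (Nat.ltb _ _); [|lra]. left; apply Rinv_0_lt_compat, lt_0_INR; lia.
Qed.

Lemma pair_weight_val e e' : (1 <= Nat.max (snd e) (snd e') < Nat.min (fst e) (fst e'))%nat ->
  pair_weight e e' = / INR (Nat.max (snd e) (snd e')).
Proof.
  intros H. unfold pair_weight.
  destruct (Nat.leb_spec 1 (Nat.max (snd e) (snd e'))); [|lia].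
  destruct (Nat.ltb_spec (Nat.max (snd e) (snd e')) (Nat.min (fst e) (fst e'))); [auto | lia].
Qed.

Lemma diag_le_pair_sum F : possible_forest F -> sumR (fun e => / INR (snd e)) F <= pair_sum F.
Proof.
  intros [Hnd [Hf Hnf]]. unfold pair_sum. apply sumR_le. intros e He.
  eapply Rle_trans; [|apply (sumR_elem (fun e' => pair_weight e e') F e He)].
  - rewrite pair_weight_val, Nat.max_id; [lra|].
    destruct (Hf e He). rewrite Nat.max_id, Nat.min_id; lia.
  - intros; apply pair_weight_nonneg.
Qed.

Lemma inv_Zn_sq_le b m : 0 < b -> (1 <= m)%nat ->
  / Zn b m * / Zn b m <= 8 / (b * b) * (/ INR m - / INR (S m)).
Proof.
  intros Hb Hm. assert (HM : 1 <= INR m) by (apply le_INR in Hm; simpl in Hm; lra).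
  pose proof (inv_Zn_le b m Hb Hm). pose proof (Zn_pos b m Hb Hm).
  assert (0 < / Zn b m) by (apply Rinv_0_lt_compat; auto).
  assert (Hp : / Zn b m * / Zn b m <= (2 / b * / INR m) * (2 / b * / INR m))
    by (apply Rmult_le_compat; lra).
  replace (2 / b * / INR m * (2 / b * / INR m)) with (4 / (b * b) * (/ INR m * / INR m))
    in Hp by (field; lra).
  replace (8 / (b * b) * (/ INR m - / INR (S m)))
    with (4 / (b * b) * (2 * (/ INR m - / INR (S m)))) by (unfold Rdiv; ring).
  eapply Rle_trans; [apply Hp|]. apply Rmult_le_compat_l.
  - apply div_nonneg; [lra | nra].
  - apply inv_sq_le_telescope; auto.
Qed.

(** Two edges cross the points of [max heads, min tails); sum_m 1/N_m^2
    over that range is O(1/max heads). *)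
Lemma pair_cross_bound b t e e' : 0 < b -> (1 <= snd e)%nat -> (1 <= snd e')%nat ->
  (fst e <= t)%nat -> (fst e' <= t)%nat ->
  sumR (fun m => ind (cross e m) * ind (cross e' m) * (/ Zn b m * / Zn b m)) (seq 1 (t - 1))
  <= 8 / (b * b) * pair_weight e e'.
Proof.
  intros Hb H1 H2 H3 H4.
  set (mu := Nat.max (snd e) (snd e')). set (nu := Nat.min (fst e) (fst e')).
  assert (Hc : 0 <= 8 / (b * b)) by (apply div_nonneg; [lra | nra]).
  rewrite (sumR_ext _ (fun m => if andb (Nat.leb mu m) (Nat.ltb m nu)
                               then / Zn b m * / Zn b m else 0)).
  2:{ intros m _. unfold ind, cross, mu, nu.
      destruct (Nat.leb_spec (snd e) m); destruct (Nat.ltb_spec m (fst e));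
      destruct (Nat.leb_spec (snd e') m); destruct (Nat.ltb_spec m (fst e'));
      destruct (Nat.leb_spec (Nat.max (snd e) (snd e')) m);
      destruct (Nat.ltb_spec m (Nat.min (fst e) (fst e'))); simpl; try ring; lia. }
  destruct (Nat.ltb_spec mu nu).
  - rewrite sumR_interval, pair_weight_val by (unfold mu, nu in *; lia). fold mu.
    eapply Rle_trans.
    + apply sumR_le with (g := fun m => 8 / (b * b) * (/ INR m - / INR (S m))).
      intros m Hm; apply in_seq in Hm. apply inv_Zn_sq_le; auto; lia.
    + rewrite sumR_scal, sumR_telescope_inv. apply Rmult_le_compat_l; auto.
      replace (mu + (nu - mu))%nat with nu by lia.
      assert (0 < / INR nu) by (apply Rinv_0_lt_compat, lt_0_INR; lia). lra.
  - rewrite (sumR_ext _ (fun _ => 0)), sumR_zero.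
    + apply Rmult_le_pos; [auto | apply pair_weight_nonneg].
    + intros m _. destruct (Nat.leb_spec mu m); destruct (Nat.ltb_spec m nu); simpl; auto; lia.
Qed.

(** sum_m y_m^2 <= C D(S): expand y_m^2 over pairs of crossing edges. *)
Lemma sum_yrate_sq b F t : 0 < b -> possible_forest F -> (smax F <= t)%nat ->
  sumR (fun m => yrate b F m * yrate b F m) (seq 1 (t - 1)) <= 8 / (b * b) * pair_sum F.
Proof.
  intros Hb [Hnd [Hf Hnf]] Ht.
  rewrite (sumR_ext _ (fun m => sumR (fun e => sumR (fun e' =>
       ind (cross e m) * ind (cross e' m) * (/ Zn b m * / Zn b m)) F) F)).
  2:{ intros m _. rewrite !yrate_sum, sumR_mult.
      apply sumR_ext; intros; apply sumR_ext; intros; ring. }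
  rewrite sumR_exchange. unfold pair_sum. rewrite <- sumR_scal. apply sumR_le. intros e He.
  rewrite sumR_exchange, <- sumR_scal. apply sumR_le. intros e' He'.
  destruct (Hf e He), (Hf e' He'), (smax_ge F e He), (smax_ge F e' He').
  apply pair_cross_bound; auto; lia.
Qed.

(** At a tail time i-1 of e', y_{i-1} only counts edges crossing i-1,
    which pair with e'. *)
Lemma sum_tail_yrate b F t : 0 < b -> possible_forest F -> (smax F <= t)%nat ->
  sumR (fun m => tail_at F m * yrate b F m) (seq 1 (t - 1)) <= 2 / b * pair_sum F.
Proof.
  intros Hb [Hnd [Hf Hnf]] Ht. unfold tail_at.
  rewrite (sumR_ext _ (fun m => sumR (fun e' => if Nat.eqb (fst e' - 1) m then yrate b F m else 0) F)).
  2:{ intros m Hm. apply in_seq in Hm. rewrite Rmult_comm, <- sumR_scal.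
      apply sumR_ext. intros e' He'. specialize (Hf e' He').
      destruct (Nat.eqb_spec (fst e') (S m)); destruct (Nat.eqb_spec (fst e' - 1) m);
        try ring; lia. }
  rewrite sumR_exchange. unfold pair_sum.
  rewrite (sumR_exchange (fun e e' => pair_weight e e') F F), <- sumR_scal.
  apply sumR_le. intros e' He'. destruct (Hf e' He'). destruct (smax_ge F e' He').
  rewrite sumR_seq_point.
  destruct (Nat.leb_spec 1 (fst e' - 1)); destruct (Nat.ltb_spec (fst e' - 1) (1 + (t - 1)));
    simpl; try lia.
  rewrite yrate_sum, <- sumR_scal. apply sumR_le. intros e He. destruct (Hf e He).
  assert (0 <= 2 / b) by (apply div_nonneg; lra).
  unfold ind, cross. destruct (Nat.leb_spec (snd e) (fst e' - 1));
    destruct (Nat.ltb_spec (fst e' - 1) (fst e)); simpl;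
    try (rewrite Rmult_0_l; apply Rmult_le_pos; [auto | apply pair_weight_nonneg]).
  rewrite pair_weight_val, Rmult_1_l by lia.
  eapply Rle_trans; [apply inv_Zn_le; auto; lia|].
  apply Rmult_le_compat_l; auto.
  apply Rinv_le_contravar; [apply lt_0_INR; lia | apply le_INR; lia].
Qed.

(** The total logarithmic error E = ln(Pr / main term). *)
Definition log_error b F t : R :=
  sumR (fun m => ln (growth b F m)) (seq 1 (t - 1))
  + sumR (fun e => ln ((2 + b) * edge_scale b e)) F.

Definition err_const b : R := edge_const b + 8 / (b * b) + 2 / b.

Lemma err_const_nonneg b : 0 < b -> 0 <= err_const b.
Proof.
  intros Hb. unfold err_const, edge_const.
  assert (0 < 4 * (4 + b) / b) by (apply Rdiv_lt_0_compat; lra).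
  assert (0 < 4 / b) by (apply Rdiv_lt_0_compat; lra).
  assert (0 < 2 / b) by (apply Rdiv_lt_0_compat; lra).
  assert (0 < 8 / (b * b)) by (apply Rdiv_lt_0_compat; nra). lra.
Qed.

Lemma sum_delta_bound b F t : 0 < b -> possible_forest F -> (smax F <= t)%nat ->
  Rabs (sumR (delta b F) (seq 1 (t - 1))) <= (8 / (b * b) + 2 / b) * pair_sum F.
Proof.
  intros Hb HF Ht. eapply Rle_trans; [apply sumR_abs|].
  eapply Rle_trans.
  - apply sumR_le with (g := fun m => yrate b F m * yrate b F m + tail_at F m * yrate b F m).
    intros m Hm; apply in_seq in Hm. apply delta_bound; auto; lia.
  - rewrite sumR_plus. pose proof (sum_yrate_sq b F t Hb HF Ht).
    pose proof (sum_tail_yrate b F t Hb HF Ht). lra.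
Qed.

Lemma sum_edge_bound b F : 0 < b -> possible_forest F ->
  Rabs (sumR (fun e => edge_harmonic b e - ln (Zn b (fst e - 1))
                      + ln ((2 + b) * edge_scale b e)) F) <= edge_const b * pair_sum F.
Proof.
  intros Hb HF. eapply Rle_trans; [apply sumR_abs|].
  eapply Rle_trans.
  - apply sumR_le with (g := fun e => edge_const b * / INR (snd e)).
    intros e He. destruct HF as [_ [Hf _]]. destruct (Hf e He). apply edge_bound; auto; lia.
  - rewrite sumR_scal. apply Rmult_le_compat_l; [|apply diag_le_pair_sum; auto].
    unfold edge_const.
    assert (0 < 4 * (4 + b) / b) by (apply Rdiv_lt_0_compat; lra).
    assert (0 < 4 / b) by (apply Rdiv_lt_0_compat; lra). lra.
Qed.

(** |E| <= C D(S): split ln M_m = y_m - [tail] ln N_m + delta_m and regroup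
    the first-order parts edge by edge. *)
Lemma log_error_bound b F t : 0 < b -> possible_forest F -> (smax F <= t)%nat ->
  Rabs (log_error b F t) <= err_const b * pair_sum F.
Proof.
  intros Hb HF Ht. unfold log_error.
  rewrite (sumR_ext (fun m => ln (growth b F m))
             (fun m => delta b F m + yrate b F m - tail_at F m * ln (Zn b m)))
    by (intros; unfold delta; ring).
  rewrite sumR_minus, sumR_plus, sum_yrate, sum_tail_ln by auto.
  replace (sumR (delta b F) (seq 1 (t - 1)) + sumR (fun e => edge_harmonic b e) F -
           sumR (fun e => ln (Zn b (fst e - 1))) F + sumR (fun e => ln ((2 + b) * edge_scale b e)) F)
    with (sumR (delta b F) (seq 1 (t - 1)) +
          sumR (fun e => edge_harmonic b e - ln (Zn b (fst e - 1))
                         + ln ((2 + b) * edge_scale b e)) F)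
    by (rewrite (sumR_plus (fun e => edge_harmonic b e - ln (Zn b (fst e - 1)))),
          (sumR_minus (fun e => edge_harmonic b e)); ring).
  eapply Rle_trans; [apply Rabs_triang|].
  pose proof (sum_delta_bound b F t Hb HF Ht). pose proof (sum_edge_bound b F Hb HF).
  unfold err_const. lra.
Qed.

Lemma prob_main_term b F t : 0 < b -> possible_forest F -> (1 <= t)%nat -> (smax F <= t)%nat ->
  prob_sub b F t = main_term b F * exp (log_error b F t).
Proof.
  intros Hb HF Ht Hm.
  assert (Hscale : forall e, 0 < (2 + b) * edge_scale b e)
    by (intros; apply Rmult_lt_0_compat; [lra | unfold edge_scale, Rpower; apply exp_pos]).
  rewrite prob_formula, mart_initial by auto. unfold main_term, log_error.
  rewrite exp_plus, (exp_sumR_ln (growth b F)), (exp_sumR_ln (fun e => (2 + b) * edge_scale b e)).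
  - pose proof (prodR_inv (fun e => (2 + b) * edge_scale b e) F (fun e _ => Hscale e)) as Hinv.
    unfold edge_scale in Hinv |- *.
    set (P := Rprod_list (map (fun e => 1 / ((2 + b) * Rpower (Rpower (INR (fst e)) (1 + b)
                                              * INR (snd e)) (1 / (2 + b)))) F)) in *.
    set (Q := Rprod_list (map (fun e => (2 + b) * Rpower (Rpower (INR (fst e)) (1 + b)
                                              * INR (snd e)) (1 / (2 + b))) F)) in *.
    set (X := b / (INR (din F 1) + b)
              * Rprod_list (map (fun v => gamma_ratio b (din F v)) (Vminus F))).
    set (M := Rprod_list (map (growth b F) (seq 1 (t - 1)))).
    transitivity (X * M * (P * Q)); [rewrite Hinv | ]; ring.
  - intros e _; auto.
  - intros m Hm'; apply in_seq in Hm'. apply growth_pos; auto; lia.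
Qed.

(** * D(S) is bounded by the error sum of the statement *)

Definition counted_at (v : nat) (e : nat * nat) : bool :=
  andb (Nat.leb v (fst e)) (Nat.ltb (snd e) v).

Lemma cS_sq F v :
  INR (cS F v) ^ 2 = sumR (fun e => sumR (fun e' => ind (counted_at v e) * ind (counted_at v e')) F) F.
Proof. unfold cS. rewrite INR_count. simpl. rewrite Rmult_1_r, sumR_mult. reflexivity. Qed.

Lemma head_min (p : nat -> bool) n : forall a x, In x (filter p (seq a n)) ->
  (nth O (filter p (seq a n)) O <= x)%nat.
Proof.
  induction n; intros a x H; simpl in *; [contradiction|].
  destruct (p a) eqn:E; [|apply IHn; auto].
  simpl in *. destruct H as [<-|H]; [lia|].
  apply filter_In in H as [H _]. apply in_seq in H. lia.
Qed.

Lemma inV_edge F e : In e F -> inV F (fst e) = true /\ inV F (snd e) = true.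
Proof.
  intros He. unfold inV. split; apply existsb_exists; exists e; split; auto;
  apply Bool.orb_true_iff; [left|right]; apply Nat.eqb_eq; auto.
Qed.

Lemma first_vertex_above F mu i : (1 <= mu < i)%nat -> (i <= smax F)%nat ->
  inV F mu = true -> inV F i = true ->
  exists r, (1 <= r <= mu)%nat /\ (r < length (verts F))%nat /\
    (mu < nth r (verts F) O)%nat /\
    forall x, (mu < x <= smax F)%nat -> inV F x = true -> (nth r (verts F) O <= x)%nat.
Proof.
  intros Hmu Hi Hvm Hvi.
  set (l1 := filter (inV F) (seq 1 mu)).
  set (l2 := filter (inV F) (seq (1 + mu) (smax F - mu))).
  assert (Hv : verts F = l1 ++ l2).
  { unfold verts, l1, l2. replace (smax F) with (mu + (smax F - mu))%nat at 1 by lia.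
    rewrite seq_app, filter_app. reflexivity. }
  assert (Hmu_in : In mu l1) by (apply filter_In; split; [apply in_seq; lia | auto]).
  assert (Hi_in : In i l2) by (apply filter_In; split; [apply in_seq; lia | auto]).
  assert (Hl2 : (1 <= length l2)%nat) by (destruct l2; [contradiction | simpl; lia]).
  assert (Hnth : nth (length l1) (verts F) O = nth O l2 O)
    by (rewrite Hv, app_nth2, Nat.sub_diag by lia; reflexivity).
  assert (Hh : In (nth O l2 O) l2) by (apply nth_In; lia).
  apply filter_In in Hh as [Hh _]. apply in_seq in Hh.
  exists (length l1). rewrite Hnth. repeat split.
  - destruct l1; [contradiction | simpl; lia].
  - unfold l1. rewrite <- (length_seq mu 1) at 2. apply filter_length_le.
  - rewrite Hv, length_app. lia.
  - lia.
  - intros x Hx Hvx. apply head_min. apply filter_In; split; [apply in_seq; lia | auto].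
Qed.

(** A crossing pair (e, e') is counted at the first vertex s_{r+1} above the
    larger head mu, where 1/r >= 1/mu. *)
Lemma pair_weight_le_err F e e' : possible_forest F -> In e F -> In e' F ->
  pair_weight e e' <=
  sumR (fun r => ind (counted_at (nth r (verts F) O) e) * ind (counted_at (nth r (verts F) O) e')
                 / INR r) (seq 1 (length (verts F) - 1)).
Proof.
  intros [Hnd [Hf Hnf]] He He'.
  assert (Hnn : forall r, In r (seq 1 (length (verts F) - 1)) ->
     0 <= ind (counted_at (nth r (verts F) O) e) * ind (counted_at (nth r (verts F) O) e') / INR r).
  { intros r Hr; apply in_seq in Hr. apply div_nonneg; [|apply lt_0_INR; lia].
    unfold ind; destruct (counted_at _ e), (counted_at _ e'); lra. }
  set (mu := Nat.max (snd e) (snd e')). set (nu := Nat.min (fst e) (fst e')).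
  destruct (Hf e He), (Hf e' He'), (smax_ge F e He), (smax_ge F e' He').
  destruct (Nat.ltb_spec mu nu).
  2:{ unfold pair_weight. fold mu nu. destruct (Nat.ltb_spec mu nu); [lia|].
      rewrite Bool.andb_false_r. apply sumR_nonneg; auto. }
  rewrite pair_weight_val by (fold mu nu; lia). fold mu.
  assert (Hvmu : inV F mu = true).
  { unfold mu. destruct (Nat.max_spec (snd e) (snd e')) as [[_ ->]|[_ ->]];
      [apply (inV_edge F e' He') | apply (inV_edge F e He)]. }
  destruct (first_vertex_above F mu (fst e)) as [r [Hr [Hrk [Hmur Hfirst]]]];
    [unfold nu in *; lia | lia | auto | apply (inV_edge F e He) |].
  pose proof (Hfirst (fst e) ltac:(unfold nu in *; lia) (proj1 (inV_edge F e He))).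
  pose proof (Hfirst (fst e') ltac:(unfold nu in *; lia) (proj1 (inV_edge F e' He'))).
  eapply Rle_trans; [|apply (sumR_elem _ _ r); [apply in_seq; lia | auto]].
  unfold ind, counted_at.
  destruct (Nat.leb_spec (nth r (verts F) O) (fst e)); [|lia].
  destruct (Nat.ltb_spec (snd e) (nth r (verts F) O)); [|unfold mu in *; lia].
  destruct (Nat.leb_spec (nth r (verts F) O) (fst e')); [|lia].
  destruct (Nat.ltb_spec (snd e') (nth r (verts F) O)); [|unfold mu in *; lia].
  simpl. unfold Rdiv. rewrite !Rmult_1_l.
  apply Rinv_le_contravar; [apply lt_0_INR; lia | apply le_INR; lia].
Qed.

(** D(S) <= sum_{j=2}^k c_S(s_j)^2/(j-1): expand c^2 as a double sum over pairs. *)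
Lemma pair_sum_le_err_sum F : possible_forest F -> pair_sum F <= err_sum F.
Proof.
  intros HF. unfold err_sum.
  rewrite (sumR_ext _ (fun r => sumR (fun e => sumR (fun e' =>
     ind (counted_at (nth r (verts F) O) e) * ind (counted_at (nth r (verts F) O) e') / INR r) F) F)).
  2:{ intros r _. rewrite cS_sq. unfold Rdiv. rewrite Rmult_comm, <- sumR_scal.
      apply sumR_ext; intros e _. rewrite <- sumR_scal. apply sumR_ext; intros; ring. }
  rewrite sumR_exchange. unfold pair_sum. apply sumR_le. intros e He.
  rewrite sumR_exchange. apply sumR_le. intros e' He'. apply pair_weight_le_err; auto.
Qed.

Theorem lemma2 (beta : R) (Hbeta : 0 < beta) :
  exists C : R,
    forall (S : forest) (t : nat),
      possible_forest S ->
      (1 <= t)%nat ->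
      (smax S <= t)%nat ->
      exists E : R,
        Rabs E <= C * err_sum S /\
        prob_sub beta S t = main_term beta S * exp E.
Proof.
  exists (err_const beta). intros S t HS Ht Hm.
  exists (log_error beta S t). split.
  - eapply Rle_trans; [apply log_error_bound; auto|].
    apply Rmult_le_compat_l; [apply err_const_nonneg; auto | apply pair_sum_le_err_sum; auto].
  - apply prob_main_term; auto.
Qed.
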